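(* Let $Q$ be a dimer quiver on a torus having at least one perfect matching, with dimer algebra $A$, and let $u\in\mathbb Z^2\setminus\{0\}$. If $p,q\in\mathcal C^u$, then $\bar\tau(p)=\bar\tau(q)\sigma^n$ for some $n\in\mathbb Z$. In particular, if $\sigma\nmid\bar\tau(p)$ and $\sigma\nmid\bar\tau(q)$, then $\bar\tau(p)=\bar\tau(q)$.
   Context: $k$ is an algebraically closed field. A dimer quiver on a torus is a finite quiver $Q$ embedded in $T^2$ such that each connected component of $T^2\setminus Q$ is simply connected and bounded by an oriented cycle (a unit cycle). Paths compose right to left. $A=kQ/I$, $I=\langle p-q\mid\exists a\in Q_1: ap,aq\text{ unit cycles}\rangle$. A perfect matching is a set of arrows containing exactly one arrow of each unit cycle; it is simple if any two vertices are joined by an oriented path avoiding its arrows; $\mathcal S$ is the set of simple matchings, $B=k[x_D\mid D\in\mathcal S]$, $\sigma=\prod_{D\in\mathcal S}x_D$. $\tau:A\to M_{|Q_0|}(B)$ is induced by $e_i\mapsto e_{ii}$, $a\mapsto\prod_{a\in D\in\mathcal S}x_D\,e_{\operatorname{h}(a),\operatorname{t}(a)}$; for $p\in e_jAe_i$, $\tau(p)=\bar\tau(p)e_{ji}$. Divisibility is in $B$. Let $\pi:\mathbb R^2\to T^2$ be a covering with $\pi(\mathbb Z^2)$ a single vertex, $Q^+=\pi^{-1}(Q)$, $p^+$ a lift of a path $p$. A cycle of $A$ is the class mod $I$ of a cycle of $Q$; $\mathcal C^u$ is the set of cycles $p$ with $\operatorname{h}(p^+)=\operatorname{t}(p^+)+u$.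 *)

From HB Require Import structures.
From mathcomp Require Import all_boot all_order all_algebra.
From mathcomp Require Import mpoly.
Set Implicit Arguments. Unset Strict Implicit. Unset Printing Implicit Defensive.
Import Order.TTheory GRing.Theory Num.Theory.
Local Open Scope ring_scope.

(* V = vertices Q_0, A = arrows Q_1, F = faces (connected components of
   T^2 \ Q).  [hd a], [tl a] are head and tail of arrow a.  [bd f] is the
   boundary unit cycle of face f, listed in traversal order (first arrow
   traversed first).  [pos f] records whether the boundary of f runs
   counterclockwise (positive) or clockwise (negative). *)
Section Dimer.
Variables (V A F : finType) (hd tl : A -> V) (bd : F -> seq A) (pos : pred F).

(* p (traversal order) is an oriented path from i to j; [::] is e_i. *)
Fixpoint qpath (i j : V) (p : seq A) : bool :=
  if p is a :: p' then (tl a == i) && qpath (hd a) j p' else i == j.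

Definition qcycle (p : seq A) : bool :=
  if p is a :: _ then qpath (tl a) (tl a) p else false.

(* half-edges: (a, true) = head end of a, (a, false) = tail end of a *)
Definition hend (e : A * bool) : V := if e.2 then hd e.1 else tl e.1.

Definition corner (e1 e2 : A * bool) : bool :=
  [exists f : F, [exists i : 'I_(size (bd f)),
     [&& e1.2, ~~ e2.2, e1.1 == nth e1.1 (bd f) i &
         e2.1 == nth e1.1 (bd f) ((i + 1) %% size (bd f))%N]]].

Definition link_rel (e1 e2 : A * bool) : bool := corner e1 e2 || corner e2 e1.

Definition adj_rel (x y : V) : bool :=
  [exists a : A, ((tl a == x) && (hd a == y)) || ((tl a == y) && (hd a == x))].

(* Q together with its faces is a cellular embedding in the torus:
   - every face is bounded by an oriented cycle (unit cycle);
   - every arrow lies on exactly one positive and one negative face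
     (the two sides of the arrow; this makes the surface closed and oriented);
   - the link of every vertex is a single circle (the surface is a manifold);
   - the quiver is nonempty and connected, and the Euler characteristic
     |Q_0| - |Q_1| + |Q_2| is 0; hence the surface is the torus. *)
Definition torus_dimer : Prop :=
  [/\ forall f, qcycle (bd f),
      forall a, (\sum_(f | pos f) count_mem a (bd f) = 1)%N /\
                (\sum_(f | ~~ pos f) count_mem a (bd f) = 1)%N,
      forall v (e1 e2 : A * bool), hend e1 = v -> hend e2 = v ->
                connect link_rel e1 e2,
      (0 < #|V|)%N /\ (forall x y, connect adj_rel x y) &
      (#|V| + #|F| = #|A|)%N].

Definition closed_chain (x : A -> int) : Prop :=
  forall v, \sum_(a | hd a == v) x a = \sum_(a | tl a == v) x a.

(* Lift data of a covering pi : R^2 -> T^2 with pi(Z^2) a vertex: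
   after choosing a lift of each vertex, the lift of arrow a starting at
   the chosen lift of tl a ends at the chosen lift of hd a translated by
   w a in Z^2.  Such w kill the boundaries of faces (faces are discs) and
   induce an isomorphism H_1(T^2; Z) -> Z^2 (the deck group); conversely
   every such w comes from such a covering. *)
Definition covering_weights (w : A -> 'rV[int]_2) : Prop :=
  [/\ forall f, \sum_(a <- bd f) w a = 0,
      forall u : 'rV[int]_2, exists x : A -> int,
        closed_chain x /\ \sum_a w a *~ x a = u &
      forall x : A -> int, closed_chain x -> \sum_a w a *~ x a = 0 ->
        exists c : F -> int, forall a, x a = \sum_f c f * (count_mem a (bd f))%:Z].

(* h(p^+) - t(p^+) for a path p *)
Definition displacement (w : A -> 'rV[int]_2) (p : seq A) : 'rV[int]_2 :=
  \sum_(a <- p) w a.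

Definition in_Cu (w : A -> 'rV[int]_2) (u : 'rV[int]_2) (p : seq A) : bool :=
  qcycle p && (displacement w p == u).

Definition perfect_matching (D : {set A}) : bool :=
  [forall f : F, count (mem D) (bd f) == 1%N].

Definition avoid_rel (D : {set A}) (x y : V) : bool :=
  [exists a : A, [&& a \notin D, tl a == x & hd a == y]].

Definition simple_matching (D : {set A}) : bool :=
  perfect_matching D && [forall i : V, forall j : V, connect (avoid_rel D) i j].

Definition simples : {set {set A}} := [set D | simple_matching D].

Definition nS : nat := #|simples|.

(* B = k[x_D | D in S]; the variable 'X_i is x_D for D = enum_val i *)
Definition matching_of (i : 'I_nS) : {set A} := @enum_val _ (mem simples) i.

Variable k : closedFieldType.

Definition tau_arrow (a : A) : {mpoly k[nS]} :=
  \prod_(i < nS) (if a \in matching_of i then 'X_i else 1).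

Definition taubar (p : seq A) : {mpoly k[nS]} := \prod_(a <- p) tau_arrow a.

Definition sigma : {mpoly k[nS]} := \prod_(i < nS) 'X_i.

End Dimer.

From HB Require Import structures.
From mathcomp Require Import all_boot all_order all_algebra.
From mathcomp Require Import mpoly.
From mathcomp Require Import zify.
Set Implicit Arguments. Unset Strict Implicit.
Import GRing.Theory.
Local Open Scope ring_scope.

(* Read a cycle p of Q as the integral 1-chain counting how often p uses each
   arrow.  For p, q in C^u the chain p - q is closed and has zero displacement,
   so it is a boundary \sum_f c_f (bd f).  A perfect matching D meets every unit
   cycle exactly once, hence |p /\ D| - |q /\ D| = \sum_f c_f for every perfect
   matching D.  As taubar p = \prod_D x_D ^ |p /\ D|, the monomials taubar p and
   taubar q differ by the power sigma ^ (\sum_f c_f). *)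

Lemma sum_mulrn_count (T : finType) (M : nmodType) (G : T -> M) (s : seq T) :
  \sum_x G x *+ count_mem x s = \sum_(x <- s) G x.
Proof.
elim: s => [|y s IHs]; first by rewrite big_nil big1 // => x _; rewrite mulr0n.
rewrite big_cons -IHs; under eq_bigr => x _ do rewrite /= mulrnDr.
rewrite big_split /= (bigD1 y) //= eqxx mulr1n big1 ?addr0 // => x /negbTE.
by rewrite eq_sym => ->.
Qed.

Lemma sum_count_mem (T : finType) (R : pzSemiRingType) (P : pred T) (s : seq T) :
  \sum_(x | P x) (count_mem x s)%:R = (count P s)%:R :> R.
Proof.
rewrite -sum1_count natr_sum [RHS]big_mkcond -sum_mulrn_count [LHS]big_mkcond /=.
by apply: eq_bigr => x _; case: (P x); rewrite ?mul0rn.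
Qed.

Lemma prod_exp_shift (I : finType) (R : comPzSemiRingType) (x : I -> R)
    (e e' : I -> nat) (m : int) :
  (forall i, (e i)%:Z = (e' i)%:Z + m) ->
  (exists n, \prod_i x i ^+ e i = \prod_i x i ^+ e' i * (\prod_i x i) ^+ n) \/
  (exists n, \prod_i x i ^+ e' i = \prod_i x i ^+ e i * (\prod_i x i) ^+ n).
Proof.
case: m => n He; [left; exists n | right; exists n.+1];
  rewrite -prodrXl -big_split /=; apply: eq_bigr => i _; rewrite -exprD;
  have := He i; rewrite ?NegzE => Hi; congr (_ ^+ _); lia.
Qed.

Lemma eq_pow_shift_ndvd (R : comPzSemiRingType) (s a b : R) :
  (exists n, a = b * s ^+ n) \/ (exists n, b = a * s ^+ n) ->
  ~ (exists g, a = s * g) -> ~ (exists g, b = s * g) -> a = b.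
Proof.
move=> [] [[|n] ->] ndvd_a ndvd_b; rewrite ?expr0 ?mulr1 //; exfalso.
- by apply: ndvd_a; exists (b * s ^+ n); rewrite exprS mulrCA.
- by apply: ndvd_b; exists (a * s ^+ n); rewrite exprS mulrCA.
Qed.

Section CyclesInCu.

Variables (V A F : finType) (hd tl : A -> V) (bd : F -> seq A).

Definition path_chain (p : seq A) (a : A) : int := (count_mem a p)%:Z.

Lemma sum_path_chain (P : pred A) (p : seq A) :
  \sum_(a | P a) path_chain p a = (count P p)%:Z.
Proof. by rewrite -natz -sum_count_mem; apply: eq_bigr => a _; rewrite natz. Qed.

Lemma displacement_path_chain (w : A -> 'rV[int]_2) (p : seq A) :
  \sum_a w a *~ path_chain p a = displacement w p.
Proof. by under eq_bigr do rewrite -pmulrn; apply: sum_mulrn_count. Qed.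

Lemma qpath_count_hd_tl (v i j : V) (p : seq A) : qpath hd tl i j p ->
  (count (fun a => hd a == v) p + (i == v) =
   count (fun a => tl a == v) p + (j == v))%N.
Proof.
elim: p i => [|a p IHp] i /=; first by move/eqP->.
case/andP=> /eqP <- /IHp.
by case: (hd a == v); case: (tl a == v); case: (j == v); rewrite /=; lia.
Qed.

Lemma qcycle_closed_chain (p : seq A) :
  qcycle hd tl p -> closed_chain hd tl (path_chain p).
Proof.
case: p => [|a p] // cyc v; rewrite !sum_path_chain; congr Posz.
by have /addIn := qpath_count_hd_tl v cyc.
Qed.

Lemma perfect_matching_boundary_sum (D : {set A}) (c : F -> int) :
  perfect_matching bd D ->
  \sum_(a in D) \sum_f c f * (count_mem a (bd f))%:Z = \sum_f c f.
Proof.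
move=> /forallP pmD; rewrite exchange_big; apply: eq_bigr => f _.
by rewrite -mulr_sumr (sum_path_chain (mem D)) (eqP (pmD f)) mulr1.
Qed.

Lemma count_matching_shift (w : A -> 'rV[int]_2) (u : 'rV[int]_2) (p q : seq A) :
  covering_weights hd tl bd w -> in_Cu hd tl w u p -> in_Cu hd tl w u q ->
  exists m : int, forall D, perfect_matching bd D ->
    (count (mem D) p)%:Z = (count (mem D) q)%:Z + m.
Proof.
case=> _ _ boundary /andP[cp /eqP dp] /andP[cq /eqP dq].
set x := fun a => path_chain p a - path_chain q a.
have closed_x : closed_chain hd tl x.
  move=> v; rewrite !sumrB.
  by rewrite (qcycle_closed_chain cp) (qcycle_closed_chain cq).
have null_x : \sum_a w a *~ x a = 0.
  under eq_bigr do rewrite mulrzBr.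
  by rewrite sumrB !displacement_path_chain dp dq subrr.
have [c x_bd] := boundary x closed_x null_x.
exists (\sum_f c f) => D pmD.
rewrite -(perfect_matching_boundary_sum c pmD) -(eq_bigr _ (fun a _ => x_bd a)).
by rewrite sumrB !sum_path_chain addrC subrK.
Qed.

Variable k : closedFieldType.

Lemma perfect_matching_of (i : 'I_(nS hd tl bd)) :
  perfect_matching bd (matching_of i).
Proof. by move: (enum_valP i); rewrite inE => /andP[]. Qed.

Lemma taubar_monomial (p : seq A) :
  taubar hd tl bd k p = \prod_i 'X_i ^+ count (mem (matching_of i)) p.
Proof.
rewrite /taubar /tau_arrow exchange_big /=; apply: eq_bigr => i _.
elim: p => [|a p IHp]; rewrite ?big_nil ?big_cons //= IHp.
by case: ifP => _; rewrite ?exprS ?mul1r.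
Qed.

End CyclesInCu.

Theorem lemma4p18 (k : closedFieldType) (V A F : finType)
  (hd tl : A -> V) (bd : F -> seq A) (pos : pred F) (w : A -> 'rV[int]_2)
  (HQ : torus_dimer hd tl bd pos) (Hw : covering_weights hd tl bd w)
  (Hpm : exists D : {set A}, perfect_matching bd D)
  (u : 'rV[int]_2) (Hu : u != 0) (p q : seq A) :
  in_Cu hd tl w u p -> in_Cu hd tl w u q ->
  ((exists n : nat, taubar hd tl bd k p = taubar hd tl bd k q * sigma hd tl bd k ^+ n)
   \/ (exists n : nat, taubar hd tl bd k q = taubar hd tl bd k p * sigma hd tl bd k ^+ n))
  /\ (~ (exists g, taubar hd tl bd k p = sigma hd tl bd k * g) ->
      ~ (exists g, taubar hd tl bd k q = sigma hd tl bd k * g) ->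
      taubar hd tl bd k p = taubar hd tl bd k q).
Proof.
move=> Cp Cq.
have [m shift_m] := count_matching_shift Hw Cp Cq.
have shift : (exists n, taubar hd tl bd k p = taubar hd tl bd k q * sigma hd tl bd k ^+ n)
    \/ (exists n, taubar hd tl bd k q = taubar hd tl bd k p * sigma hd tl bd k ^+ n).
  rewrite !taubar_monomial.
  exact: prod_exp_shift _ (fun i => shift_m _ (perfect_matching_of i)).
by split=> //; apply: eq_pow_shift_ndvd.
Qed.
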